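(* Let $d\ge1$, let $\{e^j\}_{j=1}^d$ be the standard basis of $\mathbb{R}^d$, let $\|\cdot\|_2$ be the Euclidean norm, $B_2=\{x\in\mathbb{R}^d:\|x\|_2\le1\}$, and $B^o_2(x,r)=\{y:\|y-x\|_2<r\}$. Define $a:=\frac{2}{5d+1}$, $x^j:=ae^j$ for $j=1,\dots,d$, and $x^{d+1}:=-a\sum_{j=1}^de^j$. Then for every $r>(1-a^2)^{1/2}$, $$B_2\subset\bigcup_{j=1}^{d+1}B^o_2(x^j,r).$$ *)

From HB Require Import structures.
From mathcomp Require Import all_boot all_order all_algebra.
From mathcomp Require Import reals.
Set Implicit Arguments. Unset Strict Implicit. Unset Printing Implicit Defensive.
Import Order.TTheory GRing.Theory Num.Theory.
Local Open Scope ring_scope.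

Definition norm2 (R : realType) (d : nat) (x : 'rV[R]_d) : R :=
  Num.sqrt (\sum_(i < d) x ord0 i ^+ 2).

Definition B2 (R : realType) (d : nat) : pred 'rV[R]_d :=
  fun y => norm2 y <= 1.

Definition openB2 (R : realType) (d : nat) (x : 'rV[R]_d) (r : R) : pred 'rV[R]_d :=
  fun y => norm2 (y - x) < r.

Definition e_basis (R : realType) (d : nat) (j : 'I_d) : 'rV[R]_d :=
  \row_(i < d) (if i == j then 1 else 0).

Definition a_const (R : realType) (d : nat) : R := 2 / (5 * d%:R + 1).

(* The points x^1..x^{d+1}, indexed by k : 'I_(d+1) (0-based):
   k < d gives x^{k+1} = a e^{k+1}; k = d gives x^{d+1} = -a sum_j e^j. *)
Definition xpt (R : realType) (d : nat) (k : 'I_d.+1) : 'rV[R]_d :=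
  match unlift ord_max k with
  | Some j => a_const R d *: e_basis R j
  | None => - (a_const R d *: \sum_(j < d) e_basis R j)
  end.

(* Write t = ‖y‖², S = Σ y_i, and let c be the threshold with 2ac = t + 2a² - 1.
   Then ‖y - x^j‖² = t - 2a y_j + a² ≤ 1 - a² as soon as y_j ≥ c for some j ≤ d.
   Otherwise every coordinate lies in [-1, c), so (y_i + 1)(y_i - c) ≤ 0, and
   summing gives t ≤ (c - 1) S + d c; since c ≤ a < 1 this bounds S from above,
   and with a = 2/(5d+1) the bound is exactly what makes
   ‖y - x^{d+1}‖² = t + 2a S + d a² ≤ 1 - a². Hence some squared distance is at
   most 1 - a² < r². *)
From HB Require Import structures.
From mathcomp Require Import all_boot all_order all_algebra.
From mathcomp Require Import reals.
From mathcomp Require Import ring lra.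
Import Order.TTheory GRing.Theory Num.Theory.
Local Open Scope ring_scope.

Lemma simplex_cover_ineq {R : realFieldType} {a D t c S : R} :
  1 <= D -> a * (5 * D + 1) = 2 -> 0 <= t -> t <= 1 ->
  2 * a * c = 2 * a ^+ 2 - (1 - t) ->
  t <= (c - 1) * S + D * c ->
  t + 2 * a * S + D * a ^+ 2 <= 1 - a ^+ 2.
Proof.
move=> hD ha ht0 ht1 hc hS.
have a_gt0 : 0 < a by nra.
have a_le_third : a * 3 <= 1 by nra.
have c_le_a : c <= a by nra.
have slack : 0 <= 2 * a - 2 * D * a ^+ 2 - (D + 1) * a ^+ 2 * (1 - a).
  have -> : 2 * a - 2 * D * a ^+ 2 - (D + 1) * a ^+ 2 * (1 - a) =
      a ^+ 2 * (2 * D) + (D + 1) * a ^+ 3 + a * (2 - a * (5 * D + 1)) by ring.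
  rewrite ha subrr mulr0 addr0.
  have : 0 <= a ^+ 3 by rewrite exprn_ge0 // ltW.
  have : 0 <= a ^+ 2 by rewrite exprn_ge0 // ltW.
  nra.
have key : 2 * a * (D * c - t) <= (1 - t - (D + 1) * a ^+ 2) * (1 - c) by nra.
have : (1 - c) * (2 * a * S) <= (1 - c) * (1 - t - (D + 1) * a ^+ 2) by nra.
nra.
Qed.

Section SquaredNorm.

Context {R : realType} {d : nat}.
Implicit Types (x y : 'rV[R]_d) (a : R).

Definition sqnorm2 x : R := \sum_(i < d) x ord0 i ^+ 2.

Lemma sqnorm2_ge0 x : 0 <= sqnorm2 x.
Proof. by apply: sumr_ge0 => i _; exact: sqr_ge0. Qed.

Lemma sqr_coord_le_sqnorm2 x i : x ord0 i ^+ 2 <= sqnorm2 x.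
Proof.
by rewrite /sqnorm2 (bigD1 i) //= lerDl; apply: sumr_ge0 => k _; exact: sqr_ge0.
Qed.

Lemma B2_sqnorm2 y : B2 y = (sqnorm2 y <= 1).
Proof. by rewrite /B2 /norm2 -[X in _ <= X]sqrtr1 ler_sqrt. Qed.

Lemma openB2_sqnorm2 x y (r s : R) :
  Num.sqrt s < r -> sqnorm2 (y - x) <= s -> openB2 x r y.
Proof.
move=> hr hs; apply: le_lt_trans hr.
by rewrite ler_sqrt // (le_trans (sqnorm2_ge0 _) hs).
Qed.

Lemma sqnorm2_sub_scale_basis y a (j : 'I_d) :
  sqnorm2 (y - a *: e_basis R j) = sqnorm2 y - 2 * a * y ord0 j + a ^+ 2.
Proof.
have coordE i : (y - a *: e_basis R j) ord0 i ^+ 2 =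
    y ord0 i ^+ 2 + (if i == j then a ^+ 2 - 2 * a * y ord0 i else 0).
  by rewrite !mxE; case: (i == j); ring.
rewrite /sqnorm2 (eq_bigr _ (fun i _ => coordE i)) big_split /=.
by rewrite -big_mkcond big_pred1_eq; ring.
Qed.

Lemma sqnorm2_add_scale_ones y a :
  sqnorm2 (y + a *: \sum_(j < d) e_basis R j) =
  sqnorm2 y + 2 * a * \sum_(i < d) y ord0 i + d%:R * a ^+ 2.
Proof.
have coordE i : (y + a *: \sum_(j < d) e_basis R j) ord0 i ^+ 2 =
    y ord0 i ^+ 2 + 2 * a * y ord0 i + a ^+ 2.
  rewrite !mxE summxE (eq_bigr (fun j => if j == i then 1 else 0)).
    by rewrite -big_mkcond big_pred1_eq; ring.
  by move=> j _; rewrite mxE eq_sym.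
rewrite /sqnorm2 (eq_bigr _ (fun i _ => coordE i)) !big_split /=.
by rewrite -mulr_sumr sumr_const card_ord [d%:R * _]mulr_natl.
Qed.

Lemma sqnorm2_le_of_coord_bounds y (c : R) :
  (forall i, -1 <= y ord0 i <= c) ->
  sqnorm2 y <= (c - 1) * \sum_(i < d) y ord0 i + d%:R * c.
Proof.
have -> : d%:R * c = \sum_(i < d) c by rewrite sumr_const card_ord mulr_natl.
move=> hy; rewrite mulr_sumr -big_split /=.
by apply: ler_sum => i _; case/andP: (hy i) => lo hi; nra.
Qed.

End SquaredNorm.

Lemma sqnorm2_sub_xpt_lift (R : realType) d (y : 'rV[R]_d) (j : 'I_d) :
  sqnorm2 (y - xpt R (lift ord_max j)) =
  sqnorm2 y - 2 * a_const R d * y ord0 j + a_const R d ^+ 2.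
Proof. by rewrite /xpt liftK sqnorm2_sub_scale_basis. Qed.

Lemma sqnorm2_sub_xpt_max (R : realType) d (y : 'rV[R]_d) :
  sqnorm2 (y - xpt R ord_max) =
  sqnorm2 y + 2 * a_const R d * \sum_(i < d) y ord0 i + d%:R * a_const R d ^+ 2.
Proof. by rewrite /xpt unlift_none opprK sqnorm2_add_scale_ones. Qed.

Lemma a_constE (R : realType) d : a_const R d * (5 * d%:R + 1) = 2.
Proof. by rewrite /a_const mulfVK // lt0r_neq0 // ltr_wpDl ?mulr_ge0. Qed.

Lemma a_const_gt0 (R : realType) d : 0 < a_const R d.
Proof. by rewrite divr_gt0 // ltr_wpDl ?mulr_ge0. Qed.

Theorem proposition3p2 (R : realType) (d : nat) (hd : (1 <= d)%N) (r : R)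
  (hr : Num.sqrt (1 - a_const R d ^+ 2) < r) :
  forall y : 'rV[R]_d, B2 y -> exists k : 'I_d.+1, openB2 (xpt R k) r y.
Proof.
move=> y; rewrite B2_sqnorm2 => ht.
suff [k hk] : exists k, sqnorm2 (y - xpt R k) <= 1 - a_const R d ^+ 2.
  by exists k; exact: openB2_sqnorm2 hr hk.
have a_gt0 := a_const_gt0 R d; have ha := a_constE R d; have ht0 := sqnorm2_ge0 y.
set a := a_const R d in a_gt0 ha *; set t := sqnorm2 y in ht ht0.
set c := (2 * a ^+ 2 - (1 - t)) / (2 * a).
have hc : 2 * a * c = 2 * a ^+ 2 - (1 - t).
  by rewrite mulrC mulfVK // mulf_neq0 ?lt0r_neq0.
have [/existsP [j hj] | /existsPn hall] := boolP [exists j, c <= y ord0 j].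
  exists (lift ord_max j); rewrite sqnorm2_sub_xpt_lift -/a -/t.
  have : 2 * a * c <= 2 * a * y ord0 j by rewrite ler_pM2l // mulr_gt0.
  lra.
exists ord_max; rewrite sqnorm2_sub_xpt_max -/a -/t.
have hD : 1 <= d%:R :> R by rewrite ler1n.
apply: (simplex_cover_ineq hD ha ht0 ht hc).
apply: sqnorm2_le_of_coord_bounds => i; apply/andP; split.
  by have := sqr_coord_le_sqnorm2 y i; rewrite -/t; nra.
by rewrite ltW // ltNge hall.
Qed.
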